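(* Let $X$ be a real Banach space and $\alpha>0$; put $X_\alpha=X\setminus\alpha B_X$. The following statements are equivalent. (1) $X$ is UR. (2) $r(Q_{S_X}(x,\frac1n),Q_{S_X}(x',\frac1n))\to\left\|\frac{x}{\|x\|}-\frac{x'}{\|x'\|}\right\|$ uniformly on $X_\alpha\times X_\alpha$, i.e. $\sup_{x,x'\in X_\alpha}\left|r(Q_{S_X}(x,\frac1n),Q_{S_X}(x',\frac1n))-\left\|\frac{x}{\|x\|}-\frac{x'}{\|x'\|}\right\|\right|\to0$. (3) $\sup_{x\in X_\alpha}\mathrm{diam}(Q_{S_X}(x,\frac1n))\to0$. (4) $Q_{S_X}(x)=\{-\frac{x}{\|x\|}\}$ for every $x\in X_\alpha$ and $\sup_{x\in X_\alpha}H(Q_{S_X}(x,\frac1n),Q_{S_X}(x))\to0$. (5) $S_X$ is USUR on $X_\alpha$.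
   Context: $B_X,S_X$ are the closed unit ball and unit sphere of $X$. For non-empty bounded $F$, $x\in X$, $\delta\ge0$: $r(F,x)=\sup_{y\in F}\|x-y\|$, $Q_F(x,\delta)=\{y\in F:\|x-y\|\ge r(F,x)-\delta\}$, $Q_F(x)=Q_F(x,0)$. $F$ is USUR (uniformly strongly uniquely remotal) on $A$ if $Q_F(x)$ is a singleton for every $x\in A$ and for every $\epsilon>0$ there is $\delta>0$ such that $Q_F(x,\delta)\subseteq Q_F(x)+\epsilon B_X$ for every $x\in A$. For non-empty bounded $A,B$: $r(A,B)=\sup\{\|a-b\|:a\in A,b\in B\}$ and $H(A,B)=\inf\{r>0:A\subseteq B+rB_X, B\subseteq A+rB_X\}$ (Hausdorff distance). $X$ is UR if $\|x_n-y_n\|\to0$ whenever $(x_n),(y_n)\subseteq S_X$ with $\|\frac{x_n+y_n}{2}\|\to1$. *)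

From HB Require Import structures.
From mathcomp Require Import all_boot all_order all_algebra.
From mathcomp Require Import all_classical all_reals all_analysis.
Set Implicit Arguments. Unset Strict Implicit. Unset Printing Implicit Defensive.
Import Order.TTheory GRing.Theory Num.Theory.
Import numFieldNormedType.Exports.
Local Open Scope classical_set_scope.
Local Open Scope ring_scope.

Section Remotal.
Variables (R : realType) (X : normedModType R).

Definition unit_ball : set X := [set x | `|x| <= 1].
Definition unit_sphere : set X := [set x | `|x| = 1].

(* A + r B_X, written out: points at distance <= r from A *)
Definition enlarge (A : set X) (r : R) : set X :=
  [set z | exists2 a, A a & exists2 u, unit_ball u & z = a + r *: u].

Definition rad (F : set X) (x : X) : R := sup [set `|x - y| | y in F].

Definition Qset (F : set X) (x : X) (delta : R) : set X :=
  [set y | F y /\ rad F x - delta <= `|x - y|].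

Definition Q0 (F : set X) (x : X) : set X := Qset F x 0.

Definition rad2 (A B : set X) : R :=
  sup [set r | exists a b, [/\ A a, B b & r = `|a - b|]].

Definition diamX (A : set X) : R :=
  sup [set r | exists a b, [/\ A a, A b & r = `|a - b|]].

Definition hausdorff (A B : set X) : R :=
  inf [set r | 0 < r /\ A `<=` enlarge B r /\ B `<=` enlarge A r].

Definition USUR (F A : set X) : Prop :=
  (forall x, A x -> exists y, Q0 F x = [set y]) /\
  (forall eps, 0 < eps -> exists2 delta, 0 < delta &
     forall x, A x -> Qset F x delta `<=` enlarge (Q0 F x) eps).

Definition UR : Prop :=
  forall xn yn : nat -> X,
    (forall n, unit_sphere (xn n)) -> (forall n, unit_sphere (yn n)) ->
    (fun n => `|(2%:R^-1 : R) *: (xn n + yn n)|) @ \oo --> (1 : R) ->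
    (fun n => `|xn n - yn n|) @ \oo --> (0 : R).

Definition Xout (alpha : R) : set X := [set x | ~ (`|x| <= alpha)].

Definition normalize (x : X) : X := `|x|^-1 *: x.

End Remotal.

From Pilot Require Import Defs.
From HB Require Import structures.
From mathcomp Require Import all_boot all_order all_algebra.
From mathcomp Require Import all_classical all_reals all_analysis.
From mathcomp Require Import lra.
Import Order.TTheory GRing.Theory Num.Theory.
Import numFieldNormedType.Exports.
Local Open Scope classical_set_scope.
Local Open Scope ring_scope.
Set Implicit Arguments. Unset Strict Implicit.

(* Everything reduces to one uniform property: for every eps > 0 there is
   d > 0 such that Q_{S_X}(x, d) lies within eps of the antipode -x/|x| for
   all x in X_alpha.  Since r(S_X, x) = |x| + 1, every y in Q_{S_X}(x, d)
   satisfies |x/|x| - y| >= 2 - d (1 + 1/alpha), so uniform rotundity pushes y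
   towards -x/|x|.  Conversely, if u, v in S_X and |u + v| >= 2 - d/(alpha+1),
   then both -u and -v lie in Q_{S_X}((alpha + 1) u, d); so each of (2)-(5),
   which controls the size of these sets, forces |u - v| to be small. *)
Section Sphere.
Variables (R : realType) (X : normedModType R).
Local Notation SX := (@unit_sphere R X).
Implicit Types (x y u v : X) (alpha c d : R).

Lemma norm_normalize x : x != 0 -> `|normalize x| = 1.
Proof. exact: normfZV. Qed.

Lemma sphereN u : SX (- u) = SX u.
Proof. by rewrite /unit_sphere /= normrN. Qed.

Lemma normalizeZ c u : 0 < c -> SX u -> normalize (c *: u) = u.
Proof.
rewrite /unit_sphere /= => c0 u1.
by rewrite /normalize normrZ u1 mulr1 gtr0_norm // scalerA mulVf ?gt_eqF // scale1r.
Qed.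

Lemma dist_sphere_le2 u v : SX u -> SX v -> `|u - v| <= 2.
Proof.
rewrite /unit_sphere /= => u1 v1; apply: le_trans (ler_normB _ _) _; lra.
Qed.

Lemma norm_add_normalize x : x != 0 -> `|x + normalize x| = `|x| + 1.
Proof.
move=> x0; have nx0 : `|x| != 0 by rewrite normr_eq0.
rewrite /normalize -{1}[x]scale1r -scalerDl normrZ ger0_norm; last first.
  by rewrite addr_ge0 ?invr_ge0.
by rewrite mulrDl mul1r mulVf.
Qed.

Lemma rad_sphere x : x != 0 -> Defs.rad SX x = `|x| + 1.
Proof.
move=> x0; have nx1 := norm_normalize x0.
have Ex : [set `|x - y| | y in SX] (`|x| + 1).
  by exists (- normalize x); rewrite ?sphereN ?opprK ?norm_add_normalize.
have ubE : ubound [set `|x - y| | y in SX] (`|x| + 1).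
  by move=> _ [y y1 <-]; apply: le_trans (ler_normB _ _) _; rewrite (y1 : `|y| = 1).
apply/le_anti; rewrite ge_sup ?ub_le_sup //; by exists (`|x| + 1).
Qed.

Lemma Qset_sub_sphere x d : Qset SX x d `<=` SX.
Proof. by move=> y []. Qed.

Lemma subset_Qset (F : set X) x d1 d2 : d1 <= d2 -> Qset F x d1 `<=` Qset F x d2.
Proof. by move=> d12 y [Fy le_y]; split=> //; apply: le_trans le_y; lra. Qed.

Lemma Qset_antipode x d : x != 0 -> 0 <= d -> Qset SX x d (- normalize x).
Proof.
move=> x0 d0; split; first by rewrite sphereN; exact: norm_normalize.
by rewrite rad_sphere // opprK norm_add_normalize // gerBl.
Qed.

Lemma Qset_dist_normalize_ge alpha x y d : 0 < alpha -> alpha < `|x| -> 0 <= d ->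
  Qset SX x d y -> 2 - d * (1 + alpha^-1) <= `|normalize x - y|.
Proof.
move=> a0 ax d0 [y1 +]; rewrite rad_sphere; last by rewrite -normr_eq0 gt_eqF ?(lt_trans a0).
have t0 : 0 < `|x| := lt_trans a0 ax.
have u1 : `|normalize x| = 1 by rewrite norm_normalize // -normr_eq0 gt_eqF.
have xE : x = `|x| *: normalize x by rewrite /normalize scalerA mulfV ?gt_eqF // scale1r.
rewrite [w in `|w - y|]xE.
move: (normalize x) u1 t0 ax => u u1.
set t := `|x| => t0 ax le_tuy.
have ai : alpha * alpha^-1 = 1 by rewrite mulfV ?gt_eqF.
have ai0 : 0 < alpha^-1 by rewrite invr_gt0.
have [t1|t1] := lerP 1 t.
  have : `|t *: u - y| <= t - 1 + `|u - y|.
    have -> : t *: u - y = (t - 1) *: u + (u - y) by rewrite scalerBl scale1r addrA subrK.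
    by rewrite (le_trans (ler_normD _ _)) // normrZ u1 mulr1 ger0_norm ?subr_ge0.
  have : 0 <= d * alpha^-1 by rewrite mulr_ge0 // ltW.
  lra.
have : `|t *: u - y| <= t * `|u - y| + (1 - t).
  have -> : t *: u - y = t *: (u - y) + (1 - t) *: (- y).
    by rewrite scalerBr scalerBl scale1r scalerN opprK addrACA addNr addr0.
  rewrite (le_trans (ler_normD _ _)) // !normrZ normrN (y1 : `|y| = 1) mulr1.
  by rewrite normr_id [`|1 - t|]ger0_norm // subr_ge0 ltW.
have tai : 1 <= t * alpha^-1 by rewrite -ai ler_pM2r // ltW.
nra.
Qed.

Lemma Qset_scale_sphere c d u v : 1 <= c -> SX u -> SX v -> 2 - d / c <= `|u + v| ->
  Qset SX (c *: u) d (- v).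
Proof.
move=> c1 u1 v1 uv; split; first by rewrite sphereN.
have c0 : 0 < c by lra.
have cu : `|c *: u| = c by rewrite normrZ (u1 : `|u| = 1) mulr1 gtr0_norm.
rewrite rad_sphere; last by rewrite -normr_eq0 cu gt_eqF.
rewrite cu opprK.
have : c * `|u + v| <= `|c *: u + v| + (c - 1).
  have -> : c * `|u + v| = `|(c *: u + v) + (c - 1) *: v|.
    by rewrite scalerBl scale1r addrACA subrr addr0 -scalerDr normrZ gtr0_norm.
  rewrite (le_trans (ler_normD _ _)) // normrZ (v1 : `|v| = 1) mulr1.
  by rewrite ger0_norm ?subr_ge0.
have : c * (2 - d / c) <= c * `|u + v| by rewrite ler_pM2l.
rewrite mulrBr mulrCA mulfV ?gt_eqF // mulr1; lra.
Qed.

Lemma Xout_gt alpha x : Xout alpha x -> alpha < `|x|.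
Proof. by rewrite /Xout /= ltNge => /negP. Qed.

Lemma Xout_neq0 alpha x : 0 <= alpha -> Xout alpha x -> x != 0.
Proof. by move=> a0 /Xout_gt ax; rewrite -normr_eq0 gt_eqF // (le_lt_trans a0). Qed.

Lemma Xout_scale_sphere alpha u : 0 < alpha -> SX u -> Xout alpha ((alpha + 1) *: u).
Proof.
rewrite /unit_sphere /Xout /= => a0 u1.
by rewrite normrZ u1 mulr1 gtr0_norm -?ltNge ?ltrDl //; lra.
Qed.

End Sphere.

Lemma sup_ge0_le (R : realType) (E : set R) (M : R) :
  0 <= M -> (forall r, E r -> 0 <= r <= M) -> 0 <= sup E <= M.
Proof.
move=> M0 EM; have [->|/set0P[r Er]] := eqVneq E set0; first by rewrite sup0 lexx.
have ubM : ubound E M by move=> s /EM /andP[].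
have /andP[r0 _] := EM r Er.
by rewrite ge_sup ?(le_trans r0) ?(ub_le_sup _ Er) //; [exists M | exists r].
Qed.

Section DistancesOfSets.
Variables (R : realType) (X : normedModType R).
Local Notation SX := (@unit_sphere R X).
Implicit Types (A B : set X) (y z : X) (r : R).

Lemma subset_enlarge A r : A `<=` enlarge A r.
Proof.
move=> y Ay; exists y => //; exists 0; last by rewrite scaler0 addr0.
by rewrite /unit_ball /= normr0.
Qed.

Lemma enlarge1P y z r : 0 < r -> enlarge [set z] r y <-> `|y - z| <= r.
Proof.
move=> r0; split=> [[_ -> [w w1 ->]]|yz].
  by rewrite addrC addKr normrZ gtr0_norm // ler_piMr // ltW.
exists z => //; exists (r^-1 *: (y - z)); last first.
  by rewrite scalerA mulfV ?gt_eqF // scale1r addrC subrK.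
by rewrite /unit_ball /= normrZ gtr0_norm ?invr_gt0 // ler_pdivrMl // mulr1.
Qed.

Lemma hausdorff1_bound A z r : 0 < r -> A z -> A `<=` enlarge [set z] r ->
  0 <= hausdorff A [set z] <= r.
Proof.
move=> r0 Az Ar.
have Er : [set s | 0 < s /\ A `<=` enlarge [set z] s /\ [set z] `<=` enlarge A s] r.
  by split; [|split=> // _ ->; exact: subset_enlarge].
apply/andP; split; first by apply: lb_le_inf => [|s [/ltW]]; first exists r.
by apply: ge_inf Er; exists 0 => s [/ltW].
Qed.

Lemma le_hausdorff1 A y z : A `<=` SX -> A z -> A y -> `|y - z| <= hausdorff A [set z].
Proof.
move=> AS Az Ay; apply: lb_le_inf => [|r [r0 [Ar _]]]; last by apply/(enlarge1P _ _ r0); exact: Ar.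
exists 2; split=> //; split=> [w Aw|_ ->]; last exact: subset_enlarge.
by apply/(enlarge1P _ _ (ltr0Sn R 1)); apply: dist_sphere_le2; apply: AS.
Qed.

Lemma rad2_bound A B r : 0 <= r -> (forall a b, A a -> B b -> `|a - b| <= r) ->
  0 <= rad2 A B <= r.
Proof.
by move=> r0 ABr; apply: sup_ge0_le => // _ [a [b [Aa Bb ->]]]; rewrite normr_ge0 ABr.
Qed.

Lemma rad2_sphere_le2 A B : A `<=` SX -> B `<=` SX -> 0 <= rad2 A B <= 2.
Proof.
move=> AS BS; apply: rad2_bound => // a b Aa Bb.
by apply: dist_sphere_le2; [apply: AS | apply: BS].
Qed.

Lemma le_rad2 A B a b : A `<=` SX -> B `<=` SX -> A a -> B b -> `|a - b| <= rad2 A B.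
Proof.
move=> AS BS Aa Bb; apply: ub_le_sup; last by exists a, b.
by exists 2 => _ [a' [b' [Aa' Bb' ->]]]; apply: dist_sphere_le2; [apply: AS | apply: BS].
Qed.

End DistancesOfSets.

Section UniformRotundity.
Variables (R : realType) (X : normedModType R).
Local Notation SX := (@unit_sphere R X).

Definition UR_modulus := forall eps : R, 0 < eps -> exists2 eta : R, 0 < eta &
  forall u v : X, SX u -> SX v -> 2 - eta <= `|u + v| -> `|u - v| <= eps.

Lemma UR_of_modulus : UR_modulus -> UR X.
Proof.
move=> URm xn yn Sx Sy /cvgrPdist_le mid1; apply/cvgr0Pnorm_le => e e0.
have [eta eta0 etaP] := URm e e0.
near=> n; rewrite normr_id; apply: etaP => //.
have : `|1 - `|2^-1 *: (xn n + yn n)| | <= eta / 2.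
  by near: n; apply: mid1; rewrite divr_gt0.
rewrite normrZ ger0_norm ?invr_ge0 //.
by have := ler_norm (1 - 2^-1 * `|xn n + yn n|); lra.
Unshelve. all: by end_near.
Qed.

Lemma modulus_of_UR : UR X -> UR_modulus.
Proof.
move=> URX e e0; apply: contrapT => noeta.
have bad n : exists uv : X * X, [/\ SX uv.1, SX uv.2,
    2 - n.+1%:R^-1 <= `|uv.1 + uv.2| & e < `|uv.1 - uv.2|].
  apply: contrapT => nouv; apply: noeta; exists n.+1%:R^-1 => // u v Su Sv uv.
  by rewrite leNgt; apply/negP => euv; apply: nouv; exists (u, v).
have [uv uvP] := choice bad.
have Su n : SX (uv n).1 by case: (uvP n).
have Sv n : SX (uv n).2 by case: (uvP n).
have mid1 : (fun n => `|2^-1 *: ((uv n).1 + (uv n).2)|) @ \oo --> (1 : R).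
  apply/cvgrPdist_le => r r0; near=> n.
  have [u1 v1 le_uv _] := uvP n; move: u1 v1; rewrite /unit_sphere /= => u1 v1.
  have n_small : n.+1%:R^-1 <= r by apply/ltW; near: n; exact: near_infty_natSinv_lt (PosNum r0).
  have tri := ler_normD (uv n).1 (uv n).2; have k0 : 0 <= n.+1%:R^-1 :> R by [].
  set k := n.+1%:R^-1 in k0 le_uv n_small *.
  rewrite normrZ ger0_norm ?invr_ge0 // ger0_norm; lra.
have /cvgr0Pnorm_le /(_ e e0) [N _ /(_ N (leqnn N))] := URX _ _ Su Sv mid1.
by case: (uvP N) => _ _ _; rewrite normr_id; lra.
Unshelve. all: by end_near.
Qed.

End UniformRotundity.

Section ShrinkingQsets.
Variables (R : realType) (X : normedModType R) (alpha : R).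
Hypothesis alpha_gt0 : 0 < alpha.
Local Notation SX := (@unit_sphere R X).
Local Notation Xa := (@Xout R X alpha).

Lemma Xa_neq0 x : Xa x -> x != 0.
Proof. exact: Xout_neq0 (ltW alpha_gt0). Qed.

Lemma sphere_normalize_Xout x : Xa x -> SX (normalize x).
Proof. by move=> /Xa_neq0; exact: norm_normalize. Qed.

Definition Qset_within (d eps : R) := forall x y : X,
  Xa x -> Qset SX x d y -> `|y + normalize x| <= eps.

Definition Qsets_shrink := forall eps : R, 0 < eps ->
  exists2 d : R, 0 < d & Qset_within d eps.

Lemma Qset_within_le d1 d2 eps1 eps2 : d1 <= d2 -> eps1 <= eps2 ->
  Qset_within d2 eps1 -> Qset_within d1 eps2.
Proof.
move=> d12 eps12 within2 x y xa Qy; apply: le_trans eps12.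
exact/within2/(subset_Qset d12).
Qed.

Lemma Qsets_shrink_near : Qsets_shrink ->
  forall eps : R, 0 < eps -> \forall n \near \oo, Qset_within n.+1%:R^-1 eps.
Proof.
move=> shrink e e0; have [d d0 within_d] := shrink e e0.
near=> n; apply: Qset_within_le within_d => //; apply/ltW.
by near: n; exact: near_infty_natSinv_lt (PosNum d0).
Unshelve. all: by end_near.
Qed.

Lemma Qsets_shrink_of_cvg0 (s : nat -> R) :
  (forall n, Qset_within n.+1%:R^-1 (s n)) -> s @ \oo --> 0 -> Qsets_shrink.
Proof.
move=> within_s /cvgr0Pnorm_le s0 e e0; have [N _ sN] := s0 e e0.
exists N.+1%:R^-1 => //; apply: Qset_within_le (within_s N) => //.
exact: le_trans (ler_norm _) (sN N (leqnn N)).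
Qed.

Lemma Qsets_shrink_of_modulus : UR_modulus X -> Qsets_shrink.
Proof.
move=> URm e e0; have [eta eta0 etaP] := URm e e0.
have c0 : 0 < 1 + alpha^-1 by rewrite addr_gt0 ?invr_gt0.
exists (eta / (1 + alpha^-1)) => [|x y xa Qy]; first by rewrite divr_gt0.
have far : 2 - eta <= `|normalize x - y|.
  have := Qset_dist_normalize_ge alpha_gt0 (Xout_gt xa) _ Qy.
  by rewrite mulfVK ?gt_eqF //; apply; rewrite divr_ge0 ?ltW.
rewrite addrC -[y]opprK; apply: etaP far; first exact: sphere_normalize_Xout.
by rewrite sphereN; exact: Qset_sub_sphere Qy.
Qed.

Lemma modulus_of_Qsets_shrink : Qsets_shrink -> UR_modulus X.
Proof.
move=> shrink e e0; have [d d0 within_d] := shrink e e0.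
exists (d / (alpha + 1)) => [|u v Su Sv uv]; first by rewrite divr_gt0 // addr_gt0.
have a1 : 1 <= alpha + 1 by rewrite lerDr ltW.
have := within_d _ _ (Xout_scale_sphere alpha_gt0 Su) (Qset_scale_sphere a1 Su Sv uv).
by rewrite normalizeZ ?addr_gt0 // addrC distrC.
Qed.

Lemma Q0_antipode : Qsets_shrink -> forall x, Xa x -> Q0 SX x = [set - normalize x].
Proof.
move=> shrink x xa; have x0 := Xa_neq0 xa.
apply/seteqP; split=> [y Q0y|_ ->]; last exact: Qset_antipode.
apply/eqP; rewrite -addr_eq0 -normr_le0; apply/ler_addgt0Pr => e e0; rewrite add0r.
have [d d0 within_d] := shrink e e0.
by apply: within_d xa _; apply: subset_Qset Q0y; apply: ltW.
Qed.

Lemma USUR_of_Qsets_shrink : Qsets_shrink -> USUR SX Xa.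
Proof.
move=> shrink; split=> [x xa|e e0]; first by exists (- normalize x); exact: Q0_antipode.
have [d d0 within_d] := shrink e e0.
exists d => // x xa y Qy; rewrite Q0_antipode //.
by apply/(enlarge1P _ _ e0); rewrite opprK; exact: within_d Qy.
Qed.

Lemma Qsets_shrink_of_USUR : USUR SX Xa -> Qsets_shrink.
Proof.
move=> [unique_far Q_near_far] e e0; have e2 : 0 < e / 2 by rewrite divr_gt0.
have [d d0 dP] := Q_near_far _ e2.
exists d => // x y xa Qy; have [z Q0z] := unique_far x xa.
have x0 := Xa_neq0 xa.
have yz : `|y - z| <= e / 2 by apply/(enlarge1P _ _ e2); rewrite -Q0z; exact: dP.
have az : `|- normalize x - z| <= e / 2.
  by apply/(enlarge1P _ _ e2); rewrite -Q0z; apply: dP => //; exact: Qset_antipode (ltW d0).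
rewrite -[normalize x]opprK (le_trans (ler_distD z _ _)) // [e]splitr.
by rewrite (distrC z); exact: lerD.
Qed.

Lemma rad2_Qset_le2 x x' d : 0 <= rad2 (Qset SX x d) (Qset SX x' d) <= 2.
Proof. exact: rad2_sphere_le2 (@Qset_sub_sphere _ _ x d) (@Qset_sub_sphere _ _ x' d). Qed.

Definition Qdiam_sup (n : nat) := sup [set diamX (Qset SX x n.+1%:R^-1) | x in Xa].

Lemma diam_Qset_le x d eps : Qset_within d eps -> Xa x -> 0 <= d ->
  0 <= diamX (Qset SX x d) <= eps + eps.
Proof.
move=> within_d xa d0; have x0 := Xa_neq0 xa.
have eps0 : 0 <= eps.
  by have := within_d _ _ xa (Qset_antipode x0 d0); rewrite addNr normr0.
apply: rad2_bound => [|a b Qa Qb]; first exact: addr_ge0.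
have := ler_distD (- normalize x) a b; rewrite (distrC (- _)) !opprK => le_ab.
by apply: le_trans le_ab _; apply: lerD; apply: within_d xa _.
Qed.

Lemma le_diam_Qset x d y : Xa x -> 0 <= d -> Qset SX x d y ->
  `|y + normalize x| <= diamX (Qset SX x d).
Proof.
move=> xa d0 Qy; rewrite -[normalize x]opprK.
apply: le_rad2 => //; [exact: Qset_sub_sphere | exact: Qset_sub_sphere |].
by apply: Qset_antipode d0; apply: Xa_neq0 xa.
Qed.

Lemma Qdiam_sup_cvg0 : Qsets_shrink -> Qdiam_sup @ \oo --> 0.
Proof.
move=> shrink; apply/cvgr0Pnorm_le => e e0; have e2 : 0 < e / 2 by rewrite divr_gt0.
near=> n; have within_n : Qset_within n.+1%:R^-1 (e / 2).
  by near: n; exact: Qsets_shrink_near.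
have /andP[s0 se] : 0 <= Qdiam_sup n <= e.
  apply: sup_ge0_le => [|_ [x xa <-]]; first exact: ltW.
  by rewrite [e]splitr; apply: diam_Qset_le.
by rewrite ger0_norm.
Unshelve. all: by end_near.
Qed.

Lemma Qsets_shrink_of_Qdiam : Qdiam_sup @ \oo --> 0 -> Qsets_shrink.
Proof.
apply: Qsets_shrink_of_cvg0 => n x y xa Qy.
apply: le_trans (le_diam_Qset xa _ Qy) _ => //; apply: ub_le_sup; last by exists x.
by exists 2 => _ [x' _ <-]; case/andP: (rad2_Qset_le2 x' x' n.+1%:R^-1).
Qed.

Definition Qrad2_gap_sup (n : nat) := sup [set r | exists x x', [/\ Xa x, Xa x' &
  r = `| rad2 (Qset SX x n.+1%:R^-1) (Qset SX x' n.+1%:R^-1)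
         - `|normalize x - normalize x'| | ]].

Lemma rad2_gap_Qset_le x x' d eps : Qset_within d eps -> Xa x -> Xa x' -> 0 <= d ->
  `|rad2 (Qset SX x d) (Qset SX x' d) - `|normalize x - normalize x'| | <= eps + eps.
Proof.
move=> within_d xa xa' d0; have x0 := Xa_neq0 xa; have x0' := Xa_neq0 xa'.
have lo : `|normalize x - normalize x'| <= rad2 (Qset SX x d) (Qset SX x' d).
  have := le_rad2 (@Qset_sub_sphere _ _ x d) (@Qset_sub_sphere _ _ x' d)
    (Qset_antipode x0 d0) (Qset_antipode x0' d0).
  by rewrite opprK addrC distrC.
have hi : rad2 (Qset SX x d) (Qset SX x' d) <= `|normalize x - normalize x'| + (eps + eps).
  have eps0 : 0 <= eps.
    by have := within_d _ _ xa (Qset_antipode x0 d0); rewrite addNr normr0.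
  suff /andP[] : 0 <= rad2 (Qset SX x d) (Qset SX x' d)
                  <= `|normalize x - normalize x'| + (eps + eps) by [].
  apply: rad2_bound => [|a b Qa Qb]; first by rewrite addr_ge0 ?addr_ge0.
  have := ler_distD (- normalize x) a b; rewrite opprK.
  have := ler_distD (- normalize x') (- normalize x) b.
  rewrite opprK (addrC _ (normalize x')) (distrC (normalize x')) (distrC (- normalize x') b) opprK.
  have := within_d _ _ xa Qa; have := within_d _ _ xa' Qb; lra.
by rewrite ger0_norm ?subr_ge0 // lerBlDl.
Qed.

Lemma Qrad2_gap_sup_cvg0 : Qsets_shrink -> Qrad2_gap_sup @ \oo --> 0.
Proof.
move=> shrink; apply/cvgr0Pnorm_le => e e0; have e2 : 0 < e / 2 by rewrite divr_gt0.
near=> n; have within_n : Qset_within n.+1%:R^-1 (e / 2).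
  by near: n; exact: Qsets_shrink_near.
have /andP[s0 se] : 0 <= Qrad2_gap_sup n <= e.
  apply: sup_ge0_le => [|_ [x [x' [xa xa' ->]]]]; first exact: ltW.
  by rewrite normr_ge0 [e]splitr rad2_gap_Qset_le.
by rewrite ger0_norm.
Unshelve. all: by end_near.
Qed.

Lemma Qsets_shrink_of_Qrad2_gap : Qrad2_gap_sup @ \oo --> 0 -> Qsets_shrink.
Proof.
apply: Qsets_shrink_of_cvg0 => n x y xa Qy.
apply: le_trans (le_diam_Qset xa _ Qy) _ => //; apply: ub_le_sup.
  exists 4 => _ [x1 [x2 [xa1 xa2 ->]]]; apply: le_trans (ler_normB _ _) _.
  have /andP[r0 r2] := rad2_Qset_le2 x1 x2 n.+1%:R^-1.
  have := dist_sphere_le2 (sphere_normalize_Xout xa1) (sphere_normalize_Xout xa2).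
  rewrite normr_id ger0_norm //; lra.
have /andP[r0 _] := rad2_Qset_le2 x x n.+1%:R^-1.
by exists x, x; rewrite subrr normr0 subr0 ger0_norm.
Qed.

Definition Qhausdorff_sup (n : nat) :=
  sup [set hausdorff (Qset SX x n.+1%:R^-1) (Q0 SX x) | x in Xa].

Lemma hausdorff_Qset_le x d eps : Qset_within d eps -> Xa x -> 0 <= d -> 0 < eps ->
  0 <= hausdorff (Qset SX x d) [set - normalize x] <= eps.
Proof.
move=> within_d xa d0 e0; apply: hausdorff1_bound => // [|y Qy].
  by apply: Qset_antipode d0; apply: Xa_neq0 xa.
by apply/(enlarge1P _ _ e0); rewrite opprK; exact: within_d Qy.
Qed.

Lemma le_hausdorff_Qset x d y : Xa x -> 0 <= d -> Qset SX x d y ->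
  `|y + normalize x| <= hausdorff (Qset SX x d) [set - normalize x].
Proof.
move=> xa d0 Qy; rewrite -{1}[normalize x]opprK.
apply: le_hausdorff1 => //; first exact: Qset_sub_sphere.
by apply: Qset_antipode d0; apply: Xa_neq0 xa.
Qed.

Lemma Qhausdorff_sup_cvg0 : Qsets_shrink -> Qhausdorff_sup @ \oo --> 0.
Proof.
move=> shrink; apply/cvgr0Pnorm_le => e e0.
near=> n; have within_n : Qset_within n.+1%:R^-1 e.
  by near: n; exact: Qsets_shrink_near.
have /andP[s0 se] : 0 <= Qhausdorff_sup n <= e.
  apply: sup_ge0_le => [|_ [x xa <-]]; first exact: ltW.
  by rewrite Q0_antipode // hausdorff_Qset_le.
by rewrite ger0_norm.
Unshelve. all: by end_near.
Qed.

Lemma Qsets_shrink_of_Qhausdorff :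
  (forall x, Xa x -> Q0 SX x = [set - normalize x]) ->
  Qhausdorff_sup @ \oo --> 0 -> Qsets_shrink.
Proof.
move=> Q0E; apply: Qsets_shrink_of_cvg0 => n x y xa Qy.
apply: le_trans (le_hausdorff_Qset xa _ Qy) _ => //; apply: ub_le_sup; last first.
  by exists x; rewrite ?Q0E.
exists 2 => _ [x' xa' <-]; rewrite Q0E //.
have x0' := Xa_neq0 xa'.
have Q2 : Qset SX x' n.+1%:R^-1 `<=` enlarge [set - normalize x'] 2.
  move=> z Qz; apply/(enlarge1P _ _ (ltr0Sn R 1)); apply: dist_sphere_le2.
    exact: Qset_sub_sphere Qz.
  by rewrite sphereN; apply: sphere_normalize_Xout.
have d0 : 0 <= n.+1%:R^-1 :> R by [].
by have /andP[] := hausdorff1_bound (ltr0Sn R 1) (Qset_antipode x0' d0) Q2.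
Qed.

End ShrinkingQsets.

Theorem theorem3p9 (R : realType) (X : completeNormedModType R) (alpha : R) :
  0 < alpha ->
  let S := @unit_sphere R X in
  let Xa := @Xout R X alpha in
  [<-> @UR R X;
       (fun n : nat => sup [set r | exists x x', [/\ Xa x, Xa x' &
           r = `| rad2 (Qset S x (n.+1%:R^-1)) (Qset S x' (n.+1%:R^-1))
                  - `|normalize x - normalize x'| | ]]) @ \oo --> (0 : R);
       (fun n : nat => sup [set diamX (Qset S x (n.+1%:R^-1)) | x in Xa])
           @ \oo --> (0 : R);
       (forall x, Xa x -> Q0 S x = [set - normalize x]) /\
       (fun n : nat => sup [set hausdorff (Qset S x (n.+1%:R^-1)) (Q0 S x) | x in Xa])
           @ \oo --> (0 : R);
       USUR S Xa].
Proof.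
move=> a0 S Xa; rewrite /S /Xa; tfae.
- move=> /modulus_of_UR /(Qsets_shrink_of_modulus a0).
  exact: Qrad2_gap_sup_cvg0.
- move=> /(Qsets_shrink_of_Qrad2_gap a0).
  exact: Qdiam_sup_cvg0.
- move=> /(Qsets_shrink_of_Qdiam a0) shrink.
  by split; [exact: Q0_antipode | exact: Qhausdorff_sup_cvg0].
- move=> [Q0E] /(Qsets_shrink_of_Qhausdorff a0 Q0E).
  exact: USUR_of_Qsets_shrink.
- move=> /(Qsets_shrink_of_USUR a0) /(modulus_of_Qsets_shrink a0).
  exact: UR_of_modulus.
Qed.
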